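(* Let $I=[x_1,x_N]$ with partition $x_1<\dots<x_N$, affine maps $u_i(x)=a_ix+b_i$ with $u_i(x_1)=x_i$, $u_i(x_N)=x_{i+1}$ ($i\in\mathbb{N}_{N-1}$), scaling functions $\alpha_i\in C(I)$ with $\|\alpha\|_\infty:=\max_i\|\alpha_i\|_\infty<1$, and $q\in(0,1]$. Equip $C(I)$ with the sup-norm. Then for every $n\in\mathbb{N}$ the operator $\mathcal{F}^{(q,\alpha)}_n:C(I)\to C(I)$, $\mathcal{F}^{(q,\alpha)}_n(f)=f^{(q,\alpha)}_n$, is linear and bounded.
   Context: For $q\in(0,1]$: $[k]_q=\frac{1-q^k}{1-q}$ ($q\neq1$), $[k]_1=k$, $[k]_q!=[k]_q\cdots[1]_q$, $[0]_q!=1$, $\binom{n}{k}_q=\frac{[n]_q!}{[k]_q![n-k]_q!}$. Quantum MKZ operator: $M_{n,q}f(x)=P_{n,q}(x)\sum_{k\ge0}\binom{n+k}{k}_q\left(\frac{x-x_1}{x_N-x_1}\right)^k f\!\left(x_1+(x_N-x_1)\frac{[k]_q}{[k+n]_q}\right)$ for $x_1\le x<x_N$, $M_{n,q}f(x_N)=f(x_N)$, with $P_{n,q}(x)=\prod_{j=0}^n(x_N-x_1-q^j(x-x_1))/(x_N-x_1)^{n+1}$. The quantum MKZ-fractal function $f^{(q,\alpha)}_n$ of $f\in C(I)$ is the unique $g\in C(I)$ with $g(u_i(x))=f(u_i(x))+\alpha_i(x)(g(x)-M_{n,q}f(x))$ for all $x\in I$, $i\in\mathbb{N}_{N-1}$.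 *)

From Stdlib Require Import Reals Lra ClassicalEpsilon.
From Coquelicot Require Import Coquelicot.
Open Scope R_scope.

Definition qint (q : R) (k : nat) : R :=
  if Req_EM_T q 1 then INR k else (1 - q ^ k) / (1 - q).

Fixpoint qfact (q : R) (k : nat) : R :=
  match k with
  | O => 1
  | S k' => qint q (S k') * qfact q k'
  end.

Definition qbinom (q : R) (n k : nat) : R :=
  qfact q n / (qfact q k * qfact q (n - k)).

Fixpoint Pprod (x1 xN q x : R) (n : nat) : R :=
  match n with
  | O => xN - x1 - q ^ 0 * (x - x1)
  | S n' => Pprod x1 xN q x n' * (xN - x1 - q ^ (S n') * (x - x1))
  end.

Definition Pnq (x1 xN q : R) (n : nat) (x : R) : R :=
  Pprod x1 xN q x n / (xN - x1) ^ (S n).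

Definition MKZ (x1 xN q : R) (n : nat) (f : R -> R) (x : R) : R :=
  if Rlt_dec x xN then
    Pnq x1 xN q n x *
    Series (fun k => qbinom q (n + k) k * ((x - x1) / (xN - x1)) ^ k *
                     f (x1 + (xN - x1) * (qint q k / qint q (k + n))))
  else f x.

Definition cont_on (a b : R) (f : R -> R) : Prop :=
  forall x, a <= x <= b -> forall eps, 0 < eps -> exists delta, 0 < delta /\
    forall y, a <= y <= b -> Rabs (y - x) < delta -> Rabs (f y - f x) < eps.

Definition is_qMKZ_fractal (N : nat) (xs a b : nat -> R) (alpha : nat -> R -> R)
  (q : R) (n : nat) (f g : R -> R) : Prop :=
  cont_on (xs 1%nat) (xs N) g /\
  forall i, (1 <= i <= N - 1)%nat -> forall x, xs 1%nat <= x <= xs N ->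
    g (a i * x + b i) = f (a i * x + b i)
      + alpha i x * (g x - MKZ (xs 1%nat) (xs N) q n f x).

Definition qMKZ_op (N : nat) (xs a b : nat -> R) (alpha : nat -> R -> R)
  (q : R) (n : nat) (f : R -> R) : R -> R :=
  epsilon (inhabits (fun _ : R => 0)) (is_qMKZ_fractal N xs a b alpha q n f).

From Stdlib Require Import Reals Lra Lia ClassicalEpsilon.
From Coquelicot Require Import Coquelicot.
Open Scope R_scope.

(* The quantum MKZ operator is a positive averaging operator: for x < x_N,
   M_{n,q} f x = sum_k w_k(x) f(z_k) with w_k(x) >= 0 and sum_k w_k(x) = 1, by the
   q-binomial theorem sum_k [n+k choose k]_q t^k = 1 / (t; q)_(n+1).  Hence M_{n,q} is
   linear, |M_{n,q} f| <= sup |f|, it fixes f at x_1 and x_N, and M_{n,q} f is continuous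
   because the nodes z_k accumulate at x_N.
   On the i-th piece the fractal equation reads g = f + alpha_i(u_i^-1) (g - M_{n,q} f)(u_i^-1),
   a contraction of ratio c = max_i |alpha_i| < 1 for the sup-norm; its fixed point is the
   uniform limit of the iterates starting from f.  Any solution satisfies
   |g (u_i x)| <= K + c |g x|, which gives uniqueness (K = 0), hence linearity, and the
   bound sup |g| <= (1 + c) / (1 - c) sup |f| (K = (1 + c) sup |f|). *)

Definition clamp (lo hi y : R) : R := Rmax lo (Rmin y hi).

Lemma clamp_id lo hi y : lo <= y <= hi -> clamp lo hi y = y.
Proof. intros Hy. unfold clamp. rewrite Rmin_left, Rmax_right; lra. Qed.

Lemma clamp_in lo hi y : lo <= hi -> lo <= clamp lo hi y <= hi.
Proof. intros H. unfold clamp, Rmax, Rmin. repeat destruct Rle_dec; lra. Qed.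

Lemma clamp_dist lo hi x y : lo <= hi ->
  Rabs (clamp lo hi y - clamp lo hi x) <= Rabs (y - x).
Proof.
  intros H. unfold clamp, Rmax, Rmin.
  repeat destruct Rle_dec; unfold Rabs; repeat destruct Rcase_abs; lra.
Qed.

Lemma cont_on_iff_continuity_pt lo hi f : lo <= hi ->
  cont_on lo hi f <-> forall x, continuity_pt (fun y => f (clamp lo hi y)) x.
Proof.
  intros Hlh. split.
  - intros Hf x eps Heps.
    destruct (Hf _ (clamp_in lo hi x Hlh) eps Heps) as [d [Hd Hy]].
    exists d. split; [exact Hd|]. intros y [_ Hyx]. simpl in *. unfold R_dist in *.
    apply Hy; [apply clamp_in; exact Hlh|].
    eapply Rle_lt_trans; [apply clamp_dist; exact Hlh | exact Hyx].
  - intros Hf x Hx eps Heps.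
    destruct (Hf x eps Heps) as [d [Hd Hy]].
    exists d. split; [exact Hd|]. intros y Hyi Hyx.
    destruct (Req_dec y x) as [->|Hne].
    { rewrite Rminus_diag, Rabs_R0. exact Heps. }
    specialize (Hy y (conj (conj I (not_eq_sym Hne)) Hyx)). simpl in Hy. unfold R_dist in Hy.
    rewrite !clamp_id in Hy by assumption. exact Hy.
Qed.

Section ContOn.
Variables lo hi : R.
Hypothesis Hlh : lo <= hi.

Lemma cont_on_const k : cont_on lo hi (fun _ => k).
Proof.
  apply cont_on_iff_continuity_pt; [exact Hlh|]. intros x.
  apply continuity_pt_const. intros ? ?. reflexivity.
Qed.

Lemma cont_on_plus f g :
  cont_on lo hi f -> cont_on lo hi g -> cont_on lo hi (fun x => f x + g x).
Proof.
  rewrite !cont_on_iff_continuity_pt by exact Hlh. intros Hf Hg x.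
  exact (continuity_pt_plus _ _ x (Hf x) (Hg x)).
Qed.

Lemma cont_on_minus f g :
  cont_on lo hi f -> cont_on lo hi g -> cont_on lo hi (fun x => f x - g x).
Proof.
  rewrite !cont_on_iff_continuity_pt by exact Hlh. intros Hf Hg x.
  exact (continuity_pt_minus _ _ x (Hf x) (Hg x)).
Qed.

Lemma cont_on_mult f g :
  cont_on lo hi f -> cont_on lo hi g -> cont_on lo hi (fun x => f x * g x).
Proof.
  rewrite !cont_on_iff_continuity_pt by exact Hlh. intros Hf Hg x.
  exact (continuity_pt_mult _ _ x (Hf x) (Hg x)).
Qed.

Lemma cont_on_scal k f : cont_on lo hi f -> cont_on lo hi (fun x => k * f x).
Proof. apply cont_on_mult, cont_on_const. Qed.

Lemma cont_on_bounded f : cont_on lo hi f ->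
  exists M, forall y, lo <= y <= hi -> Rabs (f y) <= M.
Proof.
  rewrite cont_on_iff_continuity_pt by exact Hlh. intros Hf.
  destruct (continuity_ab_maj (fun y => Rabs (f (clamp lo hi y))) lo hi Hlh) as [m [Hm _]].
  { intros y _. apply (continuity_pt_comp (fun y => f (clamp lo hi y)) Rabs).
    - apply Hf.
    - apply Rcontinuity_abs. }
  exists (Rabs (f (clamp lo hi m))). intros y Hy.
  specialize (Hm y Hy). rewrite clamp_id in Hm by exact Hy. exact Hm.
Qed.

End ContOn.

Lemma cont_on_ext lo hi f g :
  (forall x, lo <= x <= hi -> f x = g x) -> cont_on lo hi f -> cont_on lo hi g.
Proof.
  intros E Hf x Hx eps Heps. destruct (Hf x Hx eps Heps) as [d [Hd Hy]].
  exists d. split; [exact Hd|]. intros y Hyi Hyx. rewrite <- !E by assumption. auto.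
Qed.

Lemma cont_on_comp_affine lo hi lo' hi' f k m :
  (forall x, lo <= x <= hi -> lo' <= k * x + m <= hi') -> cont_on lo' hi' f ->
  cont_on lo hi (fun x => f (k * x + m)).
Proof.
  intros Hmaps Hf x Hx eps Heps.
  destruct (Hf _ (Hmaps x Hx) eps Heps) as [d [Hd Hy]].
  pose proof (Rabs_pos k) as Hk.
  exists (d / (Rabs k + 1)). split; [apply Rdiv_lt_0_compat; lra|].
  intros y Hyi Hyx. apply Hy; [apply Hmaps; exact Hyi|].
  replace (k * y + m - (k * x + m)) with (k * (y - x)) by ring.
  rewrite Rabs_mult.
  apply Rmult_lt_compat_r with (r := Rabs k + 1) in Hyx; [|lra].
  unfold Rdiv in Hyx. rewrite Rmult_assoc, Rinv_l, Rmult_1_r in Hyx by lra.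
  pose proof (Rabs_pos (y - x)). nra.
Qed.

Lemma cont_on_glue lo mid hi f :
  cont_on lo mid f -> cont_on mid hi f -> cont_on lo hi f.
Proof.
  intros Hl Hr x Hx eps Heps.
  assert (Hleft : exists d, 0 < d /\
            forall y, lo <= y <= mid -> Rabs (y - x) < d -> Rabs (f y - f x) < eps).
  { destruct (Rle_dec x mid) as [Hxm|Hxm].
    - apply Hl; [lra | exact Heps].
    - exists (x - mid). split; [lra|]. intros y Hy Hyx.
      apply Rabs_def2 in Hyx. lra. }
  assert (Hright : exists d, 0 < d /\
            forall y, mid <= y <= hi -> Rabs (y - x) < d -> Rabs (f y - f x) < eps).
  { destruct (Rle_dec mid x) as [Hxm|Hxm].
    - apply Hr; [lra | exact Heps].
    - exists (mid - x). split; [lra|]. intros y Hy Hyx.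
      apply Rabs_def2 in Hyx. lra. }
  destruct Hleft as [d1 [Hd1 H1]]. destruct Hright as [d2 [Hd2 H2]].
  exists (Rmin d1 d2). split; [apply Rmin_pos; assumption|].
  intros y Hy Hyx. pose proof (Rmin_l d1 d2). pose proof (Rmin_r d1 d2).
  destruct (Rle_dec y mid).
  - apply H1; lra.
  - apply H2; lra.
Qed.

Lemma le_0_of_geom_bound c K z : 0 <= c < 1 -> (forall k, z <= c ^ k * K) -> z <= 0.
Proof.
  intros Hc Hz.
  assert (Hlim : is_lim_seq (fun k => c ^ k * K) 0).
  { replace (Finite 0) with (Rbar_mult 0 K) by (simpl; f_equal; ring).
    apply is_lim_seq_scal_r, is_lim_seq_geom. rewrite Rabs_pos_eq; lra. }
  apply (is_lim_seq_le (fun _ => z) _ z 0 Hz (is_lim_seq_const z) Hlim).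
Qed.

Lemma eq_0_of_geom_bound c K z : 0 <= c < 1 -> (forall k, Rabs z <= c ^ k * K) -> z = 0.
Proof.
  intros Hc Hz. apply Rabs_eq_0, Rle_antisym; [|apply Rabs_pos].
  exact (le_0_of_geom_bound c K _ Hc Hz).
Qed.

Lemma ex_series_geom_scal c K : 0 <= c < 1 -> ex_series (fun j => K * c ^ j).
Proof.
  intros Hc. apply (ex_series_scal_l (V := R_NormedModule) K (fun j => c ^ j)).
  exists (/ (1 - c)).
  apply is_series_geom. rewrite Rabs_pos_eq; lra.
Qed.

Section GeometricLimit.
Variables (lo hi c D : R) (h : nat -> R -> R).
Hypothesis Hc : 0 <= c < 1.
Hypothesis Hstep : forall k y, lo <= y <= hi -> Rabs (h (S k) y - h k y) <= c ^ k * D.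

Definition geom_limit (y : R) : R := h 0%nat y + Series (fun j => h (S j) y - h j y).

Let tail_bound k y : lo <= y <= hi ->
  forall j, Rabs (h (S (k + j)) y - h (k + j)%nat y) <= c ^ k * D * c ^ j.
Proof. intros Hy j. rewrite Rmult_assoc, (Rmult_comm D), <- Rmult_assoc, <- pow_add. auto. Qed.

Let ex_series_abs_tail k y : lo <= y <= hi ->
  ex_series (fun j => Rabs (h (S (k + j)) y - h (k + j)%nat y)).
Proof.
  intros Hy. apply (@ex_series_le R_AbsRing R_CompleteNormedModule _ (fun j => c ^ k * D * c ^ j)).
  - intros j. simpl. unfold abs; simpl. rewrite Rabs_Rabsolu. now apply tail_bound.
  - now apply ex_series_geom_scal.
Qed.

Let geom_limit_sub k y : lo <= y <= hi ->
  geom_limit y - h k y = Series (fun j => h (S (k + j)) y - h (k + j)%nat y).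
Proof.
  intros Hy. induction k as [|k IH].
  - unfold geom_limit. simpl. ring.
  - rewrite Series_incr_1 in IH by (apply ex_series_Rabs, ex_series_abs_tail, Hy).
    rewrite Nat.add_0_r in IH.
    rewrite (Series_ext _ (fun j => h (S (S k + j)) y - h (S k + j)%nat y)) in IH
      by (intros j; rewrite Nat.add_succ_r; reflexivity).
    lra.
Qed.

Lemma geom_limit_tail k y : lo <= y <= hi ->
  Rabs (geom_limit y - h k y) <= c ^ k * (D / (1 - c)).
Proof.
  intros Hy. rewrite geom_limit_sub by exact Hy.
  eapply Rle_trans; [apply Series_Rabs, ex_series_abs_tail, Hy|].
  eapply Rle_trans.
  { apply (Series_le _ (fun j => c ^ k * D * c ^ j)); [|now apply ex_series_geom_scal].
    intros j. split; [apply Rabs_pos | now apply tail_bound]. }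
  rewrite Series_scal_l.
  rewrite (is_series_unique (pow c) _ (is_series_geom c ltac:(rewrite Rabs_pos_eq; lra))).
  right. field. lra.
Qed.

Lemma geom_limit_cont : (forall k, cont_on lo hi (h k)) -> cont_on lo hi geom_limit.
Proof.
  intros Hh x Hx eps Heps.
  set (E := D / (1 - c)).
  destruct (pow_lt_1_zero c ltac:(rewrite Rabs_pos_eq; lra) (eps / 3 / (Rabs E + 1)))
    as [k Hk]; [apply Rdiv_lt_0_compat; pose proof (Rabs_pos E); lra|].
  specialize (Hk k (le_n k)). rewrite Rabs_pos_eq in Hk by (apply pow_le; lra).
  assert (HkE : c ^ k * E < eps / 3).
  { pose proof (Rabs_pos E) as HE.
    apply Rle_lt_trans with (c ^ k * (Rabs E + 1)).
    - apply Rmult_le_compat_l; [apply pow_le; lra | pose proof (Rle_abs E); lra].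
    - replace (eps / 3) with (eps / 3 / (Rabs E + 1) * (Rabs E + 1)) by (field; lra).
      apply Rmult_lt_compat_r; [lra | exact Hk]. }
  destruct (Hh k x Hx (eps / 3) ltac:(lra)) as [d [Hd Hy]].
  exists d. split; [exact Hd|]. intros y Hyi Hyx.
  specialize (Hy y Hyi Hyx).
  pose proof (geom_limit_tail k y Hyi) as Ty. pose proof (geom_limit_tail k x Hx) as Tx.
  fold E in Ty, Tx.
  assert (Rabs (geom_limit y - geom_limit x) <=
          Rabs (geom_limit y - h k y) + Rabs (h k y - h k x) + Rabs (geom_limit x - h k x)).
  { rewrite <- (Rabs_Ropp (geom_limit x - h k x)).
    replace (geom_limit y - geom_limit x)
      with (geom_limit y - h k y + (h k y - h k x) + - (geom_limit x - h k x)) by ring.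
    eapply Rle_trans; [apply Rabs_triang|].
    apply Rplus_le_compat_r, Rabs_triang. }
  lra.
Qed.

End GeometricLimit.

(** * q-calculus *)

Lemma pow_le_one t k : 0 <= t <= 1 -> t ^ k <= 1.
Proof. intros Ht. rewrite <- (pow1 k). apply pow_incr. exact Ht. Qed.

Section QCalculus.
Variable q : R.
Hypothesis Hq : 0 < q <= 1.

Lemma qint_0 : qint q 0 = 0.
Proof. unfold qint. destruct Req_EM_T; simpl; [reflexivity | field; lra]. Qed.

Lemma qint_add m k : qint q (m + k) = qint q k + q ^ k * qint q m.
Proof.
  unfold qint. destruct Req_EM_T as [->|Hne].
  - rewrite pow1, plus_INR. ring.
  - rewrite pow_add. field. lra.
Qed.

Lemma qint_S k : qint q (S k) = qint q k + q ^ k.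
Proof.
  replace (S k) with (1 + k)%nat by lia. rewrite qint_add.
  unfold qint. destruct Req_EM_T; simpl; [ring | field; lra].
Qed.

Lemma qint_ge_pow_mul k : INR k * q ^ k <= qint q k.
Proof.
  induction k as [|k IH].
  - rewrite qint_0. simpl. lra.
  - rewrite qint_S, S_INR. simpl.
    pose proof (pow_lt q k (proj1 Hq)). pose proof (pos_INR k).
    assert (0 <= INR k * q ^ k * (1 - q)) by (apply Rmult_le_pos; [apply Rmult_le_pos|]; lra).
    nra.
Qed.

Lemma qint_ge0 k : 0 <= qint q k.
Proof.
  eapply Rle_trans; [|apply qint_ge_pow_mul].
  apply Rmult_le_pos; [apply pos_INR | apply pow_le; lra].
Qed.

Lemma qint_S_pos k : 0 < qint q (S k).
Proof. rewrite qint_S. pose proof (qint_ge0 k). pose proof (pow_lt q k (proj1 Hq)). lra. Qed.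

Lemma qfact_pos k : 0 < qfact q k.
Proof.
  induction k as [|k IH]; simpl; [lra|].
  apply Rmult_lt_0_compat; [apply qint_S_pos | exact IH].
Qed.

Lemma qbinom_add_r n k : qbinom q (n + k) k = qfact q (n + k) / (qfact q k * qfact q n).
Proof. unfold qbinom. replace (n + k - k)%nat with n by lia. reflexivity. Qed.

Lemma qbinom_pos n k : 0 < qbinom q (n + k) k.
Proof.
  rewrite qbinom_add_r. apply Rdiv_lt_0_compat; [apply qfact_pos|].
  apply Rmult_lt_0_compat; apply qfact_pos.
Qed.

Lemma qbinom_r0 n : qbinom q (n + 0) 0 = 1.
Proof.
  rewrite qbinom_add_r, Nat.add_0_r. simpl.
  field. apply Rgt_not_eq, qfact_pos.
Qed.

Lemma qbinom_0l k : qbinom q (0 + k) k = 1.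
Proof. rewrite qbinom_add_r. simpl. field. apply Rgt_not_eq, qfact_pos. Qed.

Lemma qbinom_pascal n k :
  qbinom q (S n + S k) (S k) = q ^ S n * qbinom q (S n + k) k + qbinom q (n + S k) (S k).
Proof.
  rewrite !qbinom_add_r.
  replace (S n + S k)%nat with (S (S (n + k))) by lia.
  replace (S n + k)%nat with (S (n + k)) by lia.
  replace (n + S k)%nat with (S (n + k)) by lia.
  change (qfact q (S (S (n + k)))) with (qint q (S (S (n + k))) * qfact q (S (n + k))).
  change (qfact q (S k)) with (qint q (S k) * qfact q k).
  change (qfact q (S n)) with (qint q (S n) * qfact q n).
  replace (S (S (n + k))) with (S k + S n)%nat by lia.
  rewrite qint_add.
  pose proof (qint_S_pos k). pose proof (qint_S_pos n).
  pose proof (qfact_pos k). pose proof (qfact_pos n).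
  field. repeat split; lra.
Qed.

(* [qpoch n t] is the q-Pochhammer symbol (t; q)_(n+1), with n+1 factors. *)
Fixpoint qpoch (n : nat) (t : R) : R :=
  match n with
  | O => 1 - t
  | S m => qpoch m t * (1 - q ^ S m * t)
  end.

Lemma qpoch_at_0 n : qpoch n 0 = 1.
Proof. induction n as [|n IH]; simpl; [ring | rewrite IH; ring]. Qed.

Lemma qpoch_factor_bounds k t : 0 <= t <= 1 -> 1 - t <= 1 - q ^ k * t <= 1.
Proof.
  intros Ht. pose proof (pow_le_one q k ltac:(lra)). pose proof (pow_lt q k (proj1 Hq)).
  split; nra.
Qed.

Lemma qpoch_pos n t : 0 <= t < 1 -> 0 < qpoch n t.
Proof.
  intros Ht. induction n as [|n IH]; simpl; [lra|].
  pose proof (qpoch_factor_bounds (S n) t ltac:(lra)).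
  apply Rmult_lt_0_compat; [exact IH | simpl in *; lra].
Qed.

Lemma qpoch_bounds n t : 0 <= t <= 1 -> 0 <= qpoch n t <= 1 - t.
Proof.
  intros Ht. induction n as [|n IH]; simpl; [lra|].
  pose proof (qpoch_factor_bounds (S n) t Ht). simpl in *.
  split; [apply Rmult_le_pos|]; nra.
Qed.

Lemma qpoch_continuity n t : continuity_pt (qpoch n) t.
Proof.
  assert (Hfactor : forall k, continuity_pt (fun s => 1 - q ^ k * s) t).
  { intros k. apply continuity_pt_minus; [apply continuity_pt_const; now intros ? ?|].
    apply continuity_pt_scal, continuity_pt_id. }
  induction n as [|n IH].
  - apply continuity_pt_minus; [apply continuity_pt_const; now intros ? ? | apply continuity_pt_id].
  - exact (continuity_pt_mult _ _ t IH (Hfactor (S n))).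
Qed.

(* The q-binomial theorem with negative exponent.  By Pascal's rule the coefficients
   for n+1 are the Cauchy product of those for n with the geometric series of q^(n+1) t. *)
Lemma qbinomial_series n t : 0 <= t < 1 ->
  is_series (fun k => qbinom q (n + k) k * t ^ k) (/ qpoch n t).
Proof.
  intros Ht. induction n as [|n IH].
  - apply (is_series_ext (fun k => t ^ k)).
    + intros k. change (t ^ k = qbinom q (0 + k) k * t ^ k). rewrite qbinom_0l. ring.
    + apply is_series_geom. rewrite Rabs_pos_eq; lra.
  - set (rho := q ^ S n * t).
    pose proof (pow_le_one q (S n) ltac:(lra)) as Hqn.
    pose proof (pow_lt q (S n) (proj1 Hq)) as Hqn'.
    assert (Hrho : 0 <= rho < 1) by (unfold rho; nra).
    assert (Hconv : forall k, qbinom q (S n + k) k * t ^ k =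
              sum_f_R0 (fun j => qbinom q (n + j) j * t ^ j * rho ^ (k - j)) k).
    { induction k as [|k IHk].
      - change (qbinom q (S n + 0) 0 * t ^ 0 =
                qbinom q (n + 0) 0 * t ^ 0 * rho ^ (0 - 0)).
        rewrite !qbinom_r0. simpl. ring.
      - rewrite qbinom_pascal, tech5, Nat.sub_diag.
        rewrite (sum_eq _ (fun j => qbinom q (n + j) j * t ^ j * rho ^ (k - j) * rho))
          by (intros j Hj; replace (S k - j)%nat with (S (k - j)) by lia; simpl; ring).
        rewrite <- scal_sum, <- IHk. unfold rho. simpl. ring. }
    apply (is_series_ext _ _ _ (fun k => eq_sym (Hconv k))).
    replace (/ qpoch (S n) t) with (/ qpoch n t * / (1 - rho))
      by (change (qpoch (S n) t) with (qpoch n t * (1 - rho));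
          pose proof (qpoch_pos n t Ht); field; lra).
    apply is_series_mult_pos.
    + exact IH.
    + apply is_series_geom. rewrite Rabs_pos_eq; lra.
    + intros k. apply Rmult_le_pos; [apply Rlt_le, qbinom_pos | apply pow_le; lra].
    + intros k. apply pow_le. lra.
Qed.

End QCalculus.

Lemma term_le_is_series (u : nat -> R) l k :
  (forall j, 0 <= u j) -> is_series u l -> u k <= l.
Proof.
  intros Hu Hl.
  apply Rle_trans with (sum_f_R0 u k).
  - destruct k as [|k]; simpl; [lra|]. pose proof (cond_pos_sum u k Hu). lra.
  - rewrite <- sum_n_Reals.
    apply (is_lim_seq_incr_compare (sum_n u) l Hl).
    intros m. rewrite sum_Sn. specialize (Hu (S m)). unfold plus; simpl. lra.
Qed.


Section WeightedSeries.
Variable w : nat -> R.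
Hypothesis Hw_ge0 : forall k, 0 <= w k.
Hypothesis Hw_sum : is_series w 1.

Lemma ex_series_weighted_abs d M : (forall k, Rabs (d k) <= M) ->
  ex_series (fun k => Rabs (w k * d k)).
Proof.
  intros Hd. apply (@ex_series_le R_AbsRing R_CompleteNormedModule _ (fun k => M * w k)).
  - intros k. simpl. unfold abs; simpl. rewrite Rabs_Rabsolu, Rabs_mult, Rabs_pos_eq by auto.
    pose proof (Hd k). pose proof (Hw_ge0 k). nra.
  - apply (ex_series_scal_l (V := R_NormedModule)). exists 1. exact Hw_sum.
Qed.

Lemma ex_series_weighted d M : (forall k, Rabs (d k) <= M) -> ex_series (fun k => w k * d k).
Proof. intros Hd. apply ex_series_Rabs. exact (ex_series_weighted_abs d M Hd). Qed.

Lemma weighted_abs_le d M : (forall k, Rabs (d k) <= M) -> Rabs (Series (fun k => w k * d k)) <= M.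
Proof.
  intros Hd. eapply Rle_trans; [apply Series_Rabs, (ex_series_weighted_abs d M Hd)|].
  eapply Rle_trans.
  { apply (Series_le _ (fun k => M * w k)).
    - intros k. split; [apply Rabs_pos|]. rewrite Rabs_mult, Rabs_pos_eq by auto.
      pose proof (Hd k). pose proof (Hw_ge0 k). nra.
    - apply (ex_series_scal_l (V := R_NormedModule)). exists 1. exact Hw_sum. }
  rewrite Series_scal_l, (is_series_unique w 1 Hw_sum). lra.
Qed.

Lemma weighted_lincomb d e Md Me s t :
  (forall k, Rabs (d k) <= Md) -> (forall k, Rabs (e k) <= Me) ->
  Series (fun k => w k * (s * d k + t * e k))
  = s * Series (fun k => w k * d k) + t * Series (fun k => w k * e k).
Proof.
  intros Hd He.
  rewrite (Series_ext _ (fun k => s * (w k * d k) + t * (w k * e k))) by (intros; ring).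
  rewrite Series_plus, !Series_scal_l; [reflexivity| |];
    apply (ex_series_scal_l (V := R_NormedModule)); eapply ex_series_weighted; eauto.
Qed.

Lemma weighted_sub_const d M c : (forall k, Rabs (d k) <= M) ->
  Series (fun k => w k * d k) - c = Series (fun k => w k * (d k - c)).
Proof.
  intros Hd.
  rewrite (Series_ext (fun k => w k * (d k - c)) (fun k => w k * d k - c * w k))
    by (intros; ring).
  rewrite Series_minus.
  - rewrite Series_scal_l, (is_series_unique w 1 Hw_sum). ring.
  - eapply ex_series_weighted; eauto.
  - apply (ex_series_scal_l (V := R_NormedModule)). exists 1. exact Hw_sum.
Qed.

Lemma weighted_abs_le_split d B eps K :
  (forall k, Rabs (d k) <= B) -> (forall k, (K < k)%nat -> Rabs (d k) <= eps) ->
  Rabs (Series (fun k => w k * d k)) <= B * sum_f_R0 w K + eps.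
Proof.
  intros Hd Hsmall.
  assert (Heps : 0 <= eps) by (eapply Rle_trans; [apply Rabs_pos | apply (Hsmall (S K)); lia]).
  assert (Hex : ex_series w) by (exists 1; exact Hw_sum).
  assert (Hw_tail : Series (fun j => w (S K + j)%nat) <= 1).
  { pose proof (Series_incr_n w (S K) ltac:(lia) Hex) as Hsplit.
    rewrite (is_series_unique w 1 Hw_sum) in Hsplit. change (Init.Nat.pred (S K)) with K in Hsplit.
    pose proof (cond_pos_sum w K Hw_ge0). lra. }
  rewrite (Series_incr_n _ (S K)) by (try lia; eapply ex_series_weighted; eauto).
  change (Init.Nat.pred (S K)) with K.
  eapply Rle_trans; [apply Rabs_triang|]. apply Rplus_le_compat.
  - eapply Rle_trans; [apply sum_f_R0_triangle|].
    rewrite scal_sum. apply sum_Rle. intros k _.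
    rewrite Rabs_mult, Rabs_pos_eq by auto. pose proof (Hd k). pose proof (Hw_ge0 k). nra.
  - eapply Rle_trans.
    { apply Series_Rabs. apply (ex_series_incr_n (fun k => Rabs (w k * d k)) (S K)).
      eapply ex_series_weighted_abs; eauto. }
    eapply Rle_trans.
    { apply (Series_le _ (fun j => eps * w (S K + j)%nat)).
      - intros j. split; [apply Rabs_pos|]. rewrite Rabs_mult, Rabs_pos_eq by auto.
        pose proof (Hsmall (S K + j)%nat ltac:(lia)). pose proof (Hw_ge0 (S K + j)%nat). nra.
      - apply (ex_series_scal_l (V := R_NormedModule)), (ex_series_incr_n w (S K)), Hex. }
    rewrite Series_scal_l. nra.
Qed.

End WeightedSeries.

(** * The quantum MKZ operator *)

Section MKZOperator.
Variables (x1 xN q : R) (n : nat).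
Hypothesis Hx : x1 < xN.
Hypothesis Hq : 0 < q <= 1.
Hypothesis Hn : (1 <= n)%nat.

Definition mkz_coord (x : R) : R := (x - x1) / (xN - x1).

Definition mkz_node (k : nat) : R := x1 + (xN - x1) * (qint q k / qint q (k + n)).

Definition mkz_coef (f : R -> R) (k : nat) : R := qbinom q (n + k) k * f (mkz_node k).

Definition mkz_weight (x : R) (k : nat) : R :=
  qpoch q n (mkz_coord x) * (qbinom q (n + k) k * mkz_coord x ^ k).

Lemma mkz_coord_bounds x : x1 <= x < xN -> 0 <= mkz_coord x < 1.
Proof.
  intros H. unfold mkz_coord. split.
  - apply Rdiv_le_0_compat; lra.
  - apply Rmult_lt_reg_r with (xN - x1); [lra|].
    unfold Rdiv. rewrite Rmult_assoc, Rinv_l; lra.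
Qed.

Lemma Pnq_qpoch x : Pnq x1 xN q n x = qpoch q n (mkz_coord x).
Proof.
  assert (Hprod : forall m, Pprod x1 xN q x m = (xN - x1) ^ S m * qpoch q m (mkz_coord x)).
  { unfold mkz_coord. induction m as [|m IH]; simpl; [|rewrite IH; simpl]; field; lra. }
  unfold Pnq. rewrite Hprod. field. apply pow_nonzero. lra.
Qed.

Lemma MKZ_PSeries f x : x < xN ->
  MKZ x1 xN q n f x = qpoch q n (mkz_coord x) * PSeries (mkz_coef f) (mkz_coord x).
Proof.
  intros H. unfold MKZ. destruct Rlt_dec; [|contradiction].
  rewrite Pnq_qpoch. f_equal. apply Series_ext. intros k.
  unfold mkz_coef, mkz_node, mkz_coord. ring.
Qed.

Lemma MKZ_weighted f x : x < xN ->
  MKZ x1 xN q n f x = Series (fun k => mkz_weight x k * f (mkz_node k)).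
Proof.
  intros H. rewrite MKZ_PSeries by exact H. unfold PSeries.
  rewrite <- Series_scal_l. apply Series_ext. intros k.
  unfold mkz_weight, mkz_coef. ring.
Qed.

Lemma MKZ_right_end f : MKZ x1 xN q n f xN = f xN.
Proof. unfold MKZ. destruct Rlt_dec; [lra | reflexivity]. Qed.

Lemma MKZ_left_end f : MKZ x1 xN q n f x1 = f x1.
Proof.
  rewrite MKZ_PSeries by exact Hx.
  replace (mkz_coord x1) with 0 by (unfold mkz_coord; field; lra).
  rewrite qpoch_at_0, PSeries_0. unfold mkz_coef, mkz_node.
  rewrite qint_0, qbinom_r0 by exact Hq.
  replace (x1 + (xN - x1) * (0 / qint q (0 + n))) with x1 by (unfold Rdiv; ring). ring.
Qed.

Lemma mkz_weight_nonneg x k : x1 <= x < xN -> 0 <= mkz_weight x k.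
Proof.
  intros H. pose proof (mkz_coord_bounds x H). unfold mkz_weight.
  apply Rmult_le_pos; [apply Rlt_le, qpoch_pos; auto|].
  apply Rmult_le_pos; [apply Rlt_le, qbinom_pos; exact Hq | apply pow_le; lra].
Qed.

Lemma is_series_mkz_weight x : x1 <= x < xN -> is_series (mkz_weight x) 1.
Proof.
  intros H. pose proof (mkz_coord_bounds x H) as Ht.
  pose proof (qpoch_pos q Hq n _ Ht).
  replace 1 with (qpoch q n (mkz_coord x) * / qpoch q n (mkz_coord x)) by (field; lra).
  apply (is_series_scal_l (V := R_NormedModule)), qbinomial_series; auto.
Qed.

Lemma qint_n_pos : 0 < qint q n.
Proof. destruct n as [|m]; [lia | apply qint_S_pos; exact Hq]. Qed.

Lemma mkz_node_gap k : xN - mkz_node k = (xN - x1) * (q ^ k * qint q n / qint q (k + n)).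
Proof.
  pose proof qint_n_pos. pose proof (qint_ge0 q Hq k). pose proof (pow_lt q k (proj1 Hq)).
  unfold mkz_node. rewrite (Nat.add_comm k n), qint_add by exact Hq.
  field. nra.
Qed.

Lemma mkz_node_in k : x1 <= mkz_node k <= xN.
Proof.
  pose proof qint_n_pos. pose proof (qint_ge0 q Hq k). pose proof (pow_lt q k (proj1 Hq)).
  pose proof (mkz_node_gap k) as Hgap.
  assert (0 <= qint q k / qint q (k + n)).
  { apply Rdiv_le_0_compat; [lra|]. rewrite (Nat.add_comm k n), qint_add; nra. }
  assert (0 <= q ^ k * qint q n / qint q (k + n)).
  { apply Rdiv_le_0_compat; [nra|]. rewrite (Nat.add_comm k n), qint_add; nra. }
  unfold mkz_node in *. split; nra.
Qed.

(* The nodes accumulate at the right end: [k q^k <= [k]_q] gives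
   [xN - mkz_node k <= (xN - x1) [n]_q / (k + [n]_q)]. *)
Lemma mkz_node_tends d : 0 < d -> exists K, forall k, (K <= k)%nat -> xN - mkz_node k < d.
Proof.
  intros Hd. pose proof qint_n_pos as Hqn.
  destruct (INR_archimed d ((xN - x1) * qint q n) Hd) as [K HK].
  exists K. intros k Hk. rewrite mkz_node_gap.
  pose proof (qint_ge_pow_mul q Hq k). pose proof (pow_lt q k (proj1 Hq)).
  pose proof (le_INR K k Hk). pose proof (pos_INR K).
  assert (Hden : q ^ k * (INR k + qint q n) <= qint q (k + n))
    by (rewrite (Nat.add_comm k n), qint_add; nra).
  assert (Hk_pos : 0 < qint q (k + n)) by nra.
  apply Rmult_lt_reg_r with (qint q (k + n)); [exact Hk_pos|].
  replace ((xN - x1) * (q ^ k * qint q n / qint q (k + n)) * qint q (k + n))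
    with (q ^ k * ((xN - x1) * qint q n)) by (field; lra).
  assert ((xN - x1) * qint q n < d * (INR k + qint q n)) by nra.
  nra.
Qed.

Section Bounded.
Variables (f : R -> R) (M : R).
Hypothesis Hf : forall y, x1 <= y <= xN -> Rabs (f y) <= M.

Lemma mkz_node_bound k : Rabs (f (mkz_node k)) <= M.
Proof. apply Hf, mkz_node_in. Qed.

Lemma MKZ_abs_le x : x1 <= x <= xN -> Rabs (MKZ x1 xN q n f x) <= M.
Proof.
  intros H. destruct (Req_dec x xN) as [->|Hne].
  - rewrite MKZ_right_end. apply Hf. lra.
  - rewrite MKZ_weighted by lra.
    apply weighted_abs_le;
      [intros; apply mkz_weight_nonneg; lra | apply is_series_mkz_weight; lra |].
    exact mkz_node_bound.
Qed.

Lemma mkz_radius t : 0 <= t < 1 -> Rbar_lt (Rabs t) (CV_radius (mkz_coef f)).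
Proof.
  intros Ht. set (r := (t + 1) / 2).
  assert (Hr : 0 <= r < 1) by (unfold r; lra).
  assert (Hbounded : exists B, forall k, Rabs (mkz_coef f k * r ^ k) <= B).
  { exists (M * / qpoch q n r). intros k.
    assert (Hterm : qbinom q (n + k) k * r ^ k <= / qpoch q n r).
    { apply (term_le_is_series (fun j => qbinom q (n + j) j * r ^ j)).
      - intros j. apply Rmult_le_pos; [apply Rlt_le, qbinom_pos; exact Hq | apply pow_le; lra].
      - apply qbinomial_series; auto. }
    pose proof (qbinom_pos q Hq n k). pose proof (pow_le r k (proj1 Hr)).
    pose proof (mkz_node_bound k). pose proof (Rabs_pos (f (mkz_node k))).
    unfold mkz_coef. rewrite !Rabs_mult, (Rabs_pos_eq (qbinom _ _ _)), (Rabs_pos_eq (r ^ k))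
      by lra.
    replace (qbinom q (n + k) k * Rabs (f (mkz_node k)) * r ^ k)
      with (Rabs (f (mkz_node k)) * (qbinom q (n + k) k * r ^ k)) by ring.
    apply Rle_trans with (M * (qbinom q (n + k) k * r ^ k)).
    - apply Rmult_le_compat_r; [apply Rmult_le_pos|]; lra.
    - apply Rmult_le_compat_l; lra. }
  pose proof (proj1 (CV_radius_bounded (mkz_coef f)) r Hbounded) as Hle.
  rewrite Rabs_pos_eq by lra.
  destruct (CV_radius (mkz_coef f)) as [R| |]; simpl in *; unfold r in *; lra || exact I.
Qed.

End Bounded.

Lemma MKZ_lincomb f g Mf Mg s t x :
  (forall y, x1 <= y <= xN -> Rabs (f y) <= Mf) ->
  (forall y, x1 <= y <= xN -> Rabs (g y) <= Mg) -> x1 <= x <= xN ->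
  MKZ x1 xN q n (fun y => s * f y + t * g y) x
  = s * MKZ x1 xN q n f x + t * MKZ x1 xN q n g x.
Proof.
  intros Hf Hg H. destruct (Req_dec x xN) as [->|Hne].
  - rewrite !MKZ_right_end. reflexivity.
  - rewrite !MKZ_weighted by lra.
    apply (weighted_lincomb _ (fun k => mkz_weight_nonneg x k ltac:(lra))
             (is_series_mkz_weight x ltac:(lra)) _ _ Mf Mg);
      apply mkz_node_bound; assumption.
Qed.

Lemma mkz_coord_continuity x : continuity_pt mkz_coord x.
Proof.
  unfold mkz_coord. apply (continuity_pt_div (fun y => y - x1) (fun _ => xN - x1)); [| |lra].
  - apply continuity_pt_minus; [apply continuity_pt_id | apply continuity_pt_const; now intros ? ?].
  - apply continuity_pt_const. now intros ? ?.
Qed.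

Lemma mkz_weight_head_le x K : x1 <= x < xN ->
  sum_f_R0 (mkz_weight x) K <= (xN - x) / (xN - x1) * sum_f_R0 (fun k => qbinom q (n + k) k) K.
Proof.
  intros H. pose proof (mkz_coord_bounds x H) as Ht.
  replace ((xN - x) / (xN - x1)) with (1 - mkz_coord x) by (unfold mkz_coord; field; lra).
  rewrite scal_sum. apply sum_Rle. intros k _. unfold mkz_weight.
  pose proof (qpoch_bounds q Hq n (mkz_coord x) ltac:(lra)).
  pose proof (pow_le_one (mkz_coord x) k ltac:(lra)).
  pose proof (pow_le (mkz_coord x) k (proj1 Ht)). pose proof (qbinom_pos q Hq n k).
  apply Rle_trans with (qpoch q n (mkz_coord x) * qbinom q (n + k) k).
  - apply Rmult_le_compat_l; [lra|].
    rewrite <- (Rmult_1_r (qbinom q (n + k) k)) at 2. apply Rmult_le_compat_l; lra.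
  - rewrite Rmult_comm. apply Rmult_le_compat_l; lra.
Qed.

(* Near [xN] the weights of the first [K] nodes are small, and the remaining nodes
   are close to [xN]. *)
Lemma MKZ_near_right_end f : cont_on x1 xN f ->
  forall eps, 0 < eps -> exists d, 0 < d /\
    forall y, x1 <= y <= xN -> xN - y < d -> Rabs (MKZ x1 xN q n f y - f xN) < eps.
Proof.
  intros Hf eps Heps.
  destruct (cont_on_bounded x1 xN (Rlt_le _ _ Hx) f Hf) as [M HM].
  assert (HM0 : 0 <= M) by (eapply Rle_trans; [apply Rabs_pos | apply (HM x1); lra]).
  destruct (Hf xN ltac:(lra) (eps / 2) ltac:(lra)) as [d1 [Hd1 Hclose]].
  destruct (mkz_node_tends d1 Hd1) as [K HK].
  set (W := sum_f_R0 (fun k => qbinom q (n + k) k) K).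
  assert (HW : 0 <= W) by (apply cond_pos_sum; intros k; apply Rlt_le, qbinom_pos; exact Hq).
  set (e := eps / (4 * (M * W + 1))).
  assert (He : 2 * M * W * e < eps / 2).
  { unfold e. apply Rmult_lt_reg_r with (4 * (M * W + 1)); [nra|].
    replace (2 * M * W * (eps / (4 * (M * W + 1))) * (4 * (M * W + 1))) with (2 * M * W * eps)
      by (field; nra).
    nra. }
  exists ((xN - x1) * e).
  split; [apply Rmult_lt_0_compat; unfold e; [lra | apply Rdiv_lt_0_compat; nra]|].
  intros y Hy Hyd.
  destruct (Req_dec y xN) as [->|Hne].
  { rewrite MKZ_right_end, Rminus_diag, Rabs_R0. lra. }
  assert (Hr : (xN - y) / (xN - x1) < e).
  { apply Rmult_lt_reg_r with (xN - x1); [lra|].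
    unfold Rdiv. rewrite Rmult_assoc, Rinv_l, Rmult_1_r by lra. lra. }
  pose proof (mkz_weight_head_le y K ltac:(lra)) as Hhead. fold W in Hhead.
  rewrite MKZ_weighted by lra.
  pose proof (mkz_weight_nonneg y) as Hw0. pose proof (is_series_mkz_weight y) as Hw1.
  rewrite (weighted_sub_const _ (fun k => Hw0 k ltac:(lra)) (Hw1 ltac:(lra)) _ M)
    by (intros; apply mkz_node_bound; exact HM).
  eapply Rle_lt_trans.
  { apply (weighted_abs_le_split _ (fun k => Hw0 k ltac:(lra)) (Hw1 ltac:(lra)) _
             (2 * M) (eps / 2) K).
    - intros k. pose proof (mkz_node_bound f M HM k). pose proof (HM xN ltac:(lra)).
      unfold Rminus. eapply Rle_trans; [apply Rabs_triang|]. rewrite Rabs_Ropp. lra.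
    - intros k Hk. pose proof (mkz_node_in k). pose proof (HK k ltac:(lia)).
      apply Rlt_le, Hclose; [exact (mkz_node_in k)|]. rewrite Rabs_left1; lra. }
  assert (0 <= (xN - y) / (xN - x1)) by (apply Rdiv_le_0_compat; lra).
  assert (2 * M * sum_f_R0 (mkz_weight y) K <= 2 * M * W * e).
  { apply Rle_trans with (2 * M * ((xN - y) / (xN - x1) * W)); [apply Rmult_le_compat_l; lra|].
    replace (2 * M * ((xN - y) / (xN - x1) * W)) with (2 * M * W * ((xN - y) / (xN - x1)))
      by ring.
    apply Rmult_le_compat_l; [nra | lra]. }
  lra.
Qed.

Lemma MKZ_cont f : cont_on x1 xN f -> cont_on x1 xN (MKZ x1 xN q n f).
Proof.
  intros Hf. destruct (cont_on_bounded x1 xN (Rlt_le _ _ Hx) f Hf) as [M HM].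
  intros x Hxi eps Heps.
  destruct (Rlt_le_dec x xN) as [Hlt|Hge].
  - assert (Hcont : continuity_pt
              (fun y => qpoch q n (mkz_coord y) * PSeries (mkz_coef f) (mkz_coord y)) x).
    { pose proof (mkz_coord_bounds x ltac:(lra)).
      apply (continuity_pt_mult (fun y => qpoch q n (mkz_coord y))
                                (fun y => PSeries (mkz_coef f) (mkz_coord y)));
        apply (continuity_pt_comp mkz_coord); try apply mkz_coord_continuity.
      + apply qpoch_continuity.
      + apply PSeries_continuity, (mkz_radius f M HM); assumption. }
    destruct (Hcont eps Heps) as [d [Hd Hnear]].
    exists (Rmin d (xN - x)). split; [apply Rmin_pos; lra|]. intros y Hyi Hyx.
    pose proof (Rmin_l d (xN - x)). pose proof (Rmin_r d (xN - x)).
    apply Rabs_def2 in Hyx as Hyx'.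
    rewrite !MKZ_PSeries by lra.
    destruct (Req_dec y x) as [->|Hne]; [rewrite Rminus_diag, Rabs_R0; exact Heps|].
    apply (Hnear y). split; [split; [exact I | auto] | simpl; unfold R_dist; lra].
  - assert (x = xN) by lra. subst x.
    destruct (MKZ_near_right_end f Hf eps Heps) as [d [Hd Hnear]].
    exists d. split; [exact Hd|]. intros y Hyi Hyx.
    rewrite MKZ_right_end. apply Hnear; [exact Hyi|].
    apply Rabs_def2 in Hyx. lra.
Qed.

End MKZOperator.

(** * Fractal interpolation *)

Section Partition.
Variables (N : nat) (xs a b : nat -> R).
Hypothesis HN : (2 <= N)%nat.
Hypothesis Hpart : forall i, (1 <= i < N)%nat -> xs i < xs (S i).
Hypothesis Hu : forall i, (1 <= i <= N - 1)%nat ->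
  a i * xs 1%nat + b i = xs i /\ a i * xs N + b i = xs (S i).

Local Notation x1 := (xs 1%nat).
Local Notation xN := (xs N).

Lemma xs_le i j : (1 <= i <= j)%nat -> (j <= N)%nat -> xs i <= xs j.
Proof.
  intros Hij HjN. induction j as [|j IH]; [lia|].
  destruct (Nat.eq_dec i (S j)) as [->|Hne]; [lra|].
  assert (xs j < xs (S j)) by (apply Hpart; lia).
  assert (xs i <= xs j) by (apply IH; lia). lra.
Qed.

Lemma x1_lt_xN : x1 < xN.
Proof. apply Rlt_le_trans with (xs 2%nat); [apply Hpart; lia | apply xs_le; lia]. Qed.

Lemma a_pos i : (1 <= i <= N - 1)%nat -> 0 < a i.
Proof.
  intros Hi. destruct (Hu i Hi) as [H1 H2].
  assert (xs i < xs (S i)) by (apply Hpart; lia).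
  pose proof x1_lt_xN. nra.
Qed.

Definition u_inv (i : nat) (y : R) : R := (y - b i) / a i.

Lemma u_inv_map i x : (1 <= i <= N - 1)%nat -> u_inv i (a i * x + b i) = x.
Proof. intros Hi. pose proof (a_pos i Hi). unfold u_inv. field. lra. Qed.

Lemma u_map_inv i y : (1 <= i <= N - 1)%nat -> a i * u_inv i y + b i = y.
Proof. intros Hi. pose proof (a_pos i Hi). unfold u_inv. field. lra. Qed.

Lemma u_map_piece i x : (1 <= i <= N - 1)%nat -> x1 <= x <= xN ->
  xs i <= a i * x + b i <= xs (S i).
Proof. intros Hi Hx. destruct (Hu i Hi). pose proof (a_pos i Hi). split; nra. Qed.

Lemma u_map_in i x : (1 <= i <= N - 1)%nat -> x1 <= x <= xN -> x1 <= a i * x + b i <= xN.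
Proof.
  intros Hi Hx. pose proof (u_map_piece i x Hi Hx).
  assert (x1 <= xs i) by (apply xs_le; lia).
  assert (xs (S i) <= xN) by (apply xs_le; lia). lra.
Qed.

Lemma u_inv_in i y : (1 <= i <= N - 1)%nat -> xs i <= y <= xs (S i) -> x1 <= u_inv i y <= xN.
Proof.
  intros Hi Hy. destruct (Hu i Hi). pose proof (a_pos i Hi).
  pose proof (u_map_inv i y Hi). split; nra.
Qed.

Lemma piece_exists y : x1 <= y <= xN ->
  exists i, (1 <= i <= N - 1)%nat /\ xs i <= y <= xs (S i).
Proof.
  intros Hy.
  assert (Hupto : forall m, (1 <= m <= N - 1)%nat -> y <= xs (S m) ->
            exists i, (1 <= i <= N - 1)%nat /\ xs i <= y <= xs (S i)).
  { induction m as [|m IH]; intros Hm Hym; [lia|].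
    destruct (Nat.eq_dec m 0) as [->|Hm0]; [exists 1%nat; split; [lia | lra]|].
    destruct (Rle_dec y (xs (S m))) as [Hle|Hgt].
    - apply IH; [lia | exact Hle].
    - exists (S m). split; [lia | lra]. }
  apply (Hupto (N - 1)%nat); [lia|]. replace (S (N - 1)) with N by lia. lra.
Qed.

Definition piece (y : R) : nat :=
  epsilon (inhabits 1%nat) (fun i => (1 <= i <= N - 1)%nat /\ xs i <= y <= xs (S i)).

Lemma piece_spec y : x1 <= y <= xN ->
  (1 <= piece y <= N - 1)%nat /\ xs (piece y) <= y <= xs (S (piece y)).
Proof. intros Hy. exact (epsilon_spec _ _ (piece_exists y Hy)). Qed.

Lemma cont_on_of_pieces H :
  (forall i, (1 <= i <= N - 1)%nat -> cont_on x1 xN (fun x => H (a i * x + b i))) ->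
  cont_on x1 xN H.
Proof.
  intros Hpieces.
  assert (Hpiece : forall i, (1 <= i <= N - 1)%nat -> cont_on (xs i) (xs (S i)) H).
  { intros i Hi. pose proof (a_pos i Hi).
    apply (cont_on_ext _ _ (fun y => H (a i * (/ a i * y + - b i / a i) + b i))).
    { intros y _. f_equal. field. lra. }
    apply (cont_on_comp_affine _ _ x1 xN (fun x => H (a i * x + b i))); [|exact (Hpieces i Hi)].
    intros y Hy. replace (/ a i * y + - b i / a i) with (u_inv i y) by (unfold u_inv; field; lra).
    apply u_inv_in; assumption. }
  assert (Hupto : forall m, (1 <= m <= N - 1)%nat -> cont_on x1 (xs (S m)) H).
  { induction m as [|m IH]; intros Hm; [lia|].
    destruct (Nat.eq_dec m 0) as [->|Hm0]; [apply Hpiece; lia|].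
    apply cont_on_glue with (xs (S m)); [apply IH; lia | apply Hpiece; lia]. }
  pose proof (Hupto (N - 1)%nat ltac:(lia)) as Hall.
  replace (S (N - 1)) with N in Hall by lia. exact Hall.
Qed.

Lemma abs_le_of_self_bound (phi : R -> R) c K : 0 <= c < 1 -> 0 <= K ->
  cont_on x1 xN phi ->
  (forall i, (1 <= i <= N - 1)%nat -> forall x, x1 <= x <= xN ->
     Rabs (phi (a i * x + b i)) <= K + c * Rabs (phi x)) ->
  forall y, x1 <= y <= xN -> Rabs (phi y) <= K / (1 - c).
Proof.
  intros Hc HK Hphi Hself.
  destruct (cont_on_bounded x1 xN (Rlt_le _ _ x1_lt_xN) phi Hphi) as [B HB].
  assert (Hiter : forall k y, x1 <= y <= xN -> Rabs (phi y) - K / (1 - c) <= c ^ k * B).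
  { induction k as [|k IH]; intros y Hy.
    - simpl. pose proof (HB y Hy). assert (0 <= K / (1 - c)) by (apply Rdiv_le_0_compat; lra).
      lra.
    - destruct (piece_spec y Hy) as [Hi Hyi].
      set (i := piece y) in *.
      pose proof (u_inv_in i y Hi Hyi) as Hx.
      rewrite <- (u_map_inv i y Hi).
      pose proof (Hself i Hi _ Hx). pose proof (IH _ Hx).
      replace (K / (1 - c)) with (K + c * (K / (1 - c))) by (field; lra).
      simpl. nra. }
  intros y Hy. pose proof (le_0_of_geom_bound c B _ Hc (fun k => Hiter k y Hy)). lra.
Qed.

Section AlphaFractal.
Variables (alpha : nat -> R -> R) (c : R) (f s : R -> R).
Hypothesis Halpha_cont : forall i, (1 <= i <= N - 1)%nat -> cont_on x1 xN (alpha i).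
Hypothesis Hc : 0 <= c < 1.
Hypothesis Halpha_le : forall i, (1 <= i <= N - 1)%nat -> forall x, x1 <= x <= xN ->
  Rabs (alpha i x) <= c.
Hypothesis Hf : cont_on x1 xN f.
Hypothesis Hs : cont_on x1 xN s.
Hypothesis Hs_left : s x1 = f x1.
Hypothesis Hs_right : s xN = f xN.

(* The alpha-fractal function of [f] with base function [s]; the quantum MKZ-fractal
   function is the case [s = M_{n,q} f]. *)
Definition is_alpha_fractal (g : R -> R) : Prop :=
  cont_on x1 xN g /\
  forall i, (1 <= i <= N - 1)%nat -> forall x, x1 <= x <= xN ->
    g (a i * x + b i) = f (a i * x + b i) + alpha i x * (g x - s x).

Definition fractal_step (h : R -> R) (y : R) : R :=
  f y + alpha (piece y) (u_inv (piece y) y) * (h (u_inv (piece y) y) - s (u_inv (piece y) y)).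

Definition agrees_at_ends (h : R -> R) : Prop := h x1 = f x1 /\ h xN = f xN.

(* At a break point shared by two pieces, both sides of the equation reduce to [f],
   because [h] and [s] agree with [f] at the ends of the interval. *)
Lemma fractal_step_map h i x : agrees_at_ends h -> (1 <= i <= N - 1)%nat -> x1 <= x <= xN ->
  fractal_step h (a i * x + b i) = f (a i * x + b i) + alpha i x * (h x - s x).
Proof.
  intros [Hh_left Hh_right] Hi Hx. unfold fractal_step.
  set (y := a i * x + b i).
  destruct (piece_spec y (u_map_in i x Hi Hx)) as [Hj Hyj].
  pose proof (u_map_piece i x Hi Hx) as Hyi. fold y in Hyi.
  set (j := piece y) in *.
  destruct (Compare_dec.lt_eq_lt_dec j i) as [[Hlt|Heq]|Hgt].
  - assert (xs (S j) <= xs i) by (apply xs_le; lia).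
    destruct (Hu i Hi) as [Hi_left _]. destruct (Hu j Hj) as [_ Hj_right].
    assert (Ex : x = x1).
    { rewrite <- (u_inv_map i x Hi), <- (u_inv_map i x1 Hi). f_equal. fold y. lra. }
    assert (Ey : u_inv j y = xN) by (rewrite <- (u_inv_map j xN Hj); f_equal; lra).
    rewrite Ey, Ex, Hh_left, Hh_right, Hs_left, Hs_right. ring.
  - subst j. rewrite Heq. unfold y. rewrite u_inv_map by exact Hi. reflexivity.
  - assert (xs (S i) <= xs j) by (apply xs_le; lia).
    destruct (Hu i Hi) as [_ Hi_right]. destruct (Hu j Hj) as [Hj_left _].
    assert (Ex : x = xN).
    { rewrite <- (u_inv_map i x Hi), <- (u_inv_map i xN Hi). f_equal. fold y. lra. }
    assert (Ey : u_inv j y = x1) by (rewrite <- (u_inv_map j x1 Hj); f_equal; lra).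
    rewrite Ey, Ex, Hh_left, Hh_right, Hs_left, Hs_right. ring.
Qed.

Lemma fractal_step_agrees_at_ends h : agrees_at_ends h -> agrees_at_ends (fractal_step h).
Proof.
  intros Hh. pose proof x1_lt_xN.
  destruct (Hu 1%nat ltac:(lia)) as [H1 _].
  destruct (Hu (N - 1)%nat ltac:(lia)) as [_ H2]. replace (S (N - 1)) with N in H2 by lia.
  split.
  - rewrite <- H1 at 1. rewrite fractal_step_map by (assumption || lia || lra).
    rewrite H1, (proj1 Hh), Hs_left. ring.
  - rewrite <- H2 at 1. rewrite fractal_step_map by (assumption || lia || lra).
    rewrite H2, (proj2 Hh), Hs_right. ring.
Qed.

Lemma fractal_step_cont h : agrees_at_ends h -> cont_on x1 xN h ->
  cont_on x1 xN (fractal_step h).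
Proof.
  intros Hends Hh. pose proof x1_lt_xN as Hlt.
  apply cont_on_of_pieces. intros i Hi.
  apply (cont_on_ext _ _ (fun x => f (a i * x + b i) + alpha i x * (h x - s x)));
    [intros x Hx; symmetry; apply fractal_step_map; assumption|].
  apply cont_on_plus; [lra| |].
  - apply (cont_on_comp_affine _ _ x1 xN); [intros x Hx; apply u_map_in; assumption | exact Hf].
  - apply cont_on_mult; [lra | apply Halpha_cont, Hi |].
    apply cont_on_minus; [lra | exact Hh | exact Hs].
Qed.

Definition fractal_iter (k : nat) : R -> R := Nat.iter k fractal_step f.

Lemma fractal_iter_spec k : agrees_at_ends (fractal_iter k) /\ cont_on x1 xN (fractal_iter k).
Proof.
  induction k as [|k [Hends Hcont]]; simpl.
  - split; [split; reflexivity | exact Hf].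
  - split; [apply fractal_step_agrees_at_ends | apply fractal_step_cont]; assumption.
Qed.

Lemma fractal_iter_diff_le D :
  (forall y, x1 <= y <= xN -> Rabs (fractal_iter 1 y - fractal_iter 0 y) <= D) ->
  forall k y, x1 <= y <= xN -> Rabs (fractal_iter (S k) y - fractal_iter k y) <= c ^ k * D.
Proof.
  intros HD k. induction k as [|k IH]; intros y Hy.
  - rewrite Rmult_1_l. exact (HD y Hy).
  - destruct (piece_spec y Hy) as [Hi Hyi].
    replace (fractal_iter (S (S k)) y - fractal_iter (S k) y)
      with (alpha (piece y) (u_inv (piece y) y) *
            (fractal_iter (S k) (u_inv (piece y) y) - fractal_iter k (u_inv (piece y) y)))
      by (simpl; unfold fractal_step; ring).
    pose proof (u_inv_in _ y Hi Hyi) as Hx.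
    rewrite Rabs_mult. simpl pow. rewrite Rmult_assoc.
    apply Rmult_le_compat; [apply Rabs_pos | apply Rabs_pos | | apply IH; exact Hx].
    apply Halpha_le; assumption.
Qed.

Lemma alpha_fractal_exists : exists g, is_alpha_fractal g.
Proof.
  pose proof x1_lt_xN as Hlt.
  destruct (cont_on_bounded x1 xN ltac:(lra) (fun y => fractal_iter 1 y - fractal_iter 0 y))
    as [D HD].
  { apply cont_on_minus; [lra | apply fractal_iter_spec ..]. }
  pose proof (fractal_iter_diff_le D HD) as Hstep.
  set (E := D / (1 - c)).
  exists (geom_limit fractal_iter). split.
  - apply (geom_limit_cont x1 xN c D); [exact Hc | exact Hstep | intros k; apply fractal_iter_spec].
  - intros i Hi x Hx. apply Rminus_diag_uniq.
    apply (eq_0_of_geom_bound c (2 * c * E) _ Hc). intros k.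
    pose proof (fractal_step_map _ i x (proj1 (fractal_iter_spec k)) Hi Hx) as Hmap.
    change (fractal_step (fractal_iter k)) with (fractal_iter (S k)) in Hmap.
    pose proof (geom_limit_tail x1 xN c D _ Hc Hstep (S k) _ (u_map_in i x Hi Hx)) as Hlim_u.
    pose proof (geom_limit_tail x1 xN c D _ Hc Hstep k _ Hx) as Hlim.
    pose proof (Halpha_le i Hi x Hx). pose proof (pow_le c k (proj1 Hc)).
    fold E in Hlim_u, Hlim. simpl pow in Hlim_u.
    replace (geom_limit fractal_iter (a i * x + b i) -
             (f (a i * x + b i) + alpha i x * (geom_limit fractal_iter x - s x)))
      with ((geom_limit fractal_iter (a i * x + b i) - fractal_iter (S k) (a i * x + b i))
            - alpha i x * (geom_limit fractal_iter x - fractal_iter k x))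
      by (rewrite Hmap; ring).
    unfold Rminus at 1. eapply Rle_trans; [apply Rabs_triang|].
    rewrite Rabs_Ropp, Rabs_mult.
    assert (Rabs (alpha i x) * Rabs (geom_limit fractal_iter x - fractal_iter k x)
            <= c * (c ^ k * E)) by (apply Rmult_le_compat; auto using Rabs_pos).
    lra.
Qed.

Lemma alpha_fractal_unique g1 g2 : is_alpha_fractal g1 -> is_alpha_fractal g2 ->
  forall y, x1 <= y <= xN -> g1 y = g2 y.
Proof.
  intros [Hg1 Heq1] [Hg2 Heq2] y Hy. pose proof x1_lt_xN.
  apply Rminus_diag_uniq, Rabs_eq_0, Rle_antisym; [|apply Rabs_pos].
  replace 0 with (0 / (1 - c)) by (field; lra).
  apply (abs_le_of_self_bound (fun y => g1 y - g2 y) c 0 Hc (Rle_refl 0));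
    [apply cont_on_minus; [lra | exact Hg1 | exact Hg2] | | exact Hy].
  intros i Hi x Hx. rewrite Heq1, Heq2 by assumption.
  replace (f (a i * x + b i) + alpha i x * (g1 x - s x)
           - (f (a i * x + b i) + alpha i x * (g2 x - s x)))
    with (alpha i x * (g1 x - g2 x)) by ring.
  rewrite Rabs_mult. pose proof (Halpha_le i Hi x Hx).
  pose proof (Rabs_pos (g1 x - g2 x)). nra.
Qed.

Lemma alpha_fractal_abs_le g M : is_alpha_fractal g ->
  (forall y, x1 <= y <= xN -> Rabs (f y) <= M) ->
  (forall y, x1 <= y <= xN -> Rabs (s y) <= M) ->
  forall y, x1 <= y <= xN -> Rabs (g y) <= (1 + c) / (1 - c) * M.
Proof.
  intros [Hg Heq] HfM HsM y Hy. pose proof x1_lt_xN.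
  assert (HM : 0 <= M) by (eapply Rle_trans; [apply Rabs_pos | apply (HfM x1); lra]).
  replace ((1 + c) / (1 - c) * M) with ((1 + c) * M / (1 - c)) by (field; lra).
  apply (abs_le_of_self_bound g c ((1 + c) * M) Hc ltac:(nra) Hg); [|exact Hy].
  intros i Hi x Hx. rewrite Heq by assumption.
  pose proof (HfM _ (u_map_in i x Hi Hx)). pose proof (HsM x Hx).
  pose proof (Halpha_le i Hi x Hx).
  assert (Rabs (g x - s x) <= Rabs (g x) + M).
  { unfold Rminus. eapply Rle_trans; [apply Rabs_triang|]. rewrite Rabs_Ropp. lra. }
  eapply Rle_trans; [apply Rabs_triang|]. rewrite Rabs_mult.
  pose proof (Rabs_pos (alpha i x)). pose proof (Rabs_pos (g x - s x)). nra.
Qed.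

End AlphaFractal.

End Partition.

Section QuantumMKZFractal.
Variables (N : nat) (xs a b : nat -> R) (alpha : nat -> R -> R) (q c : R) (n : nat).
Hypothesis HN : (2 <= N)%nat.
Hypothesis Hpart : forall i, (1 <= i < N)%nat -> xs i < xs (S i).
Hypothesis Hu : forall i, (1 <= i <= N - 1)%nat ->
  a i * xs 1%nat + b i = xs i /\ a i * xs N + b i = xs (S i).
Hypothesis Halpha_cont : forall i, (1 <= i <= N - 1)%nat -> cont_on (xs 1%nat) (xs N) (alpha i).
Hypothesis Hc : 0 <= c < 1.
Hypothesis Halpha_le : forall i, (1 <= i <= N - 1)%nat -> forall x, xs 1%nat <= x <= xs N ->
  Rabs (alpha i x) <= c.
Hypothesis Hq : 0 < q <= 1.
Hypothesis Hn : (1 <= n)%nat.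

Local Notation x1 := (xs 1%nat).
Local Notation xN := (xs N).
Local Notation F := (qMKZ_op N xs a b alpha q n).

Lemma qMKZ_op_spec f : cont_on x1 xN f -> is_qMKZ_fractal N xs a b alpha q n f (F f).
Proof.
  intros Hf. pose proof (x1_lt_xN N xs HN Hpart) as Hx.
  unfold qMKZ_op. apply epsilon_spec.
  apply (alpha_fractal_exists N xs a b HN Hpart Hu alpha c f (MKZ x1 xN q n f)); try assumption.
  - exact (MKZ_cont _ _ q n Hx Hq Hn f Hf).
  - exact (MKZ_left_end _ _ q n Hx Hq f).
  - exact (MKZ_right_end _ _ q n f).
Qed.

Lemma qMKZ_op_lincomb f g s t : cont_on x1 xN f -> cont_on x1 xN g ->
  forall x, x1 <= x <= xN -> F (fun y => s * f y + t * g y) x = s * F f x + t * F g x.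
Proof.
  intros Hf Hg x Hx. pose proof (x1_lt_xN N xs HN Hpart) as Hlt.
  destruct (cont_on_bounded _ _ (Rlt_le _ _ Hlt) f Hf) as [Mf HMf].
  destruct (cont_on_bounded _ _ (Rlt_le _ _ Hlt) g Hg) as [Mg HMg].
  destruct (qMKZ_op_spec f Hf) as [HFf Heqf]. destruct (qMKZ_op_spec g Hg) as [HFg Heqg].
  set (h := fun y => s * f y + t * g y).
  assert (Hh : cont_on x1 xN h)
    by (apply cont_on_plus; [lra | apply cont_on_scal; [lra | assumption] ..]).
  apply (alpha_fractal_unique N xs a b HN Hpart Hu alpha c h (MKZ x1 xN q n h) Hc Halpha_le
           (F h) (fun y => s * F f y + t * F g y));
    [exact (qMKZ_op_spec h Hh) | split | exact Hx].
  - apply cont_on_plus; [lra | apply cont_on_scal; [lra | assumption] ..].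
  - intros i Hi y Hy. unfold h.
    rewrite Heqf, Heqg, (MKZ_lincomb _ _ q n Hlt Hq Hn f g Mf Mg s t y HMf HMg Hy) by assumption.
    ring.
Qed.

Lemma qMKZ_op_abs_le f M : cont_on x1 xN f -> (forall y, x1 <= y <= xN -> Rabs (f y) <= M) ->
  forall x, x1 <= x <= xN -> Rabs (F f x) <= (1 + c) / (1 - c) * M.
Proof.
  intros Hf HM. pose proof (x1_lt_xN N xs HN Hpart) as Hx.
  apply (alpha_fractal_abs_le N xs a b HN Hpart Hu alpha c f (MKZ x1 xN q n f) Hc Halpha_le);
    [exact (qMKZ_op_spec f Hf) | exact HM |].
  exact (MKZ_abs_le _ _ q n Hx Hq Hn f M HM).
Qed.

End QuantumMKZFractal.

Theorem theorem3p2
  (N : nat) (xs a b : nat -> R) (alpha : nat -> R -> R) (q : R)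
  (HN : (2 <= N)%nat)
  (Hpart : forall i, (1 <= i < N)%nat -> xs i < xs (S i))
  (Hu : forall i, (1 <= i <= N - 1)%nat ->
          a i * xs 1%nat + b i = xs i /\ a i * xs N + b i = xs (S i))
  (Halpha_cont : forall i, (1 <= i <= N - 1)%nat -> cont_on (xs 1%nat) (xs N) (alpha i))
  (Halpha_norm : exists c, c < 1 /\
      forall i, (1 <= i <= N - 1)%nat -> forall x, xs 1%nat <= x <= xs N ->
        Rabs (alpha i x) <= c)
  (Hq : 0 < q <= 1) :
  forall n : nat, (1 <= n)%nat ->
    (* F maps C(I) into C(I) *)
    (forall f, cont_on (xs 1%nat) (xs N) f ->
       cont_on (xs 1%nat) (xs N) (qMKZ_op N xs a b alpha q n f)) /\
    (* linearity *)
    (forall (f g : R -> R) (s t : R),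
       cont_on (xs 1%nat) (xs N) f -> cont_on (xs 1%nat) (xs N) g ->
       forall x, xs 1%nat <= x <= xs N ->
         qMKZ_op N xs a b alpha q n (fun y => s * f y + t * g y) x
         = s * qMKZ_op N xs a b alpha q n f x + t * qMKZ_op N xs a b alpha q n g x) /\
    (* boundedness w.r.t. the sup-norm on I *)
    (exists C, 0 <= C /\
       forall f, cont_on (xs 1%nat) (xs N) f ->
       forall M, (forall y, xs 1%nat <= y <= xs N -> Rabs (f y) <= M) ->
       forall x, xs 1%nat <= x <= xs N ->
         Rabs (qMKZ_op N xs a b alpha q n f x) <= C * M).
Proof.
  intros n Hn. destruct Halpha_norm as [c [Hc1 Halpha_le]].
  assert (Hc : 0 <= c < 1).
  { pose proof (x1_lt_xN N xs HN Hpart).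
    pose proof (Halpha_le 1%nat ltac:(lia) (xs 1%nat) ltac:(lra)).
    pose proof (Rabs_pos (alpha 1%nat (xs 1%nat))). lra. }
  split; [|split].
  - intros f Hf. exact (proj1 (qMKZ_op_spec N xs a b alpha q c n HN Hpart Hu Halpha_cont
                                 Hc Halpha_le Hq Hn f Hf)).
  - exact (qMKZ_op_lincomb N xs a b alpha q c n HN Hpart Hu Halpha_cont Hc Halpha_le Hq Hn).
  - exists ((1 + c) / (1 - c)). split; [apply Rdiv_le_0_compat; lra|].
    intros f Hf M HM.
    exact (qMKZ_op_abs_le N xs a b alpha q c n HN Hpart Hu Halpha_cont Hc Halpha_le Hq Hn
             f M Hf HM).
Qed.
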